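(* For all types $A$ and $B$: $A \simeq B$ holds if and only if there exist types $A'$ and $B'$ such that $A \equiv A'$, $A' \sim B'$ and $B' \equiv B$.
   Context: Types and rows share one grammar: $A,B,C,\rho ::= X \mid \alpha \mid \star \mid \iota \mid A\to B \mid \forall X{:}K.\,A \mid [\rho] \mid \langle\rho\rangle \mid \cdot \mid \ell{:}A;\rho$, where $X$ ranges over type variables (bound by $\forall$), $\alpha$ over type names, $\star$ is the dynamic type (also serving as the dynamic row), $\iota$ over base types, $[\rho]$ and $\langle\rho\rangle$ are record and variant types, $\cdot$ is the empty row, $\ell$ ranges over labels, and $K\in\{\mathsf T,\mathsf R\}$ is a kind. Types are identified up to renaming of bound variables; $\mathit{ftv}(A)$ is the set of free type variables. Row matching $\rho \triangleright_\ell A,\rho'$ is defined by: $(\ell{:}A;\rho)\triangleright_\ell A,\rho$; if $\ell'\neq\ell$ and $\rho\triangleright_\ell A,\rho'$ then $(\ell'{:}B;\rho)\triangleright_\ell A,(\ell'{:}B;\rho')$; and $\star\triangleright_\ell \star,\star$. $\mathbf{QPoly}(A)$ holds iff $A$ is not of the form $\forall X{:}K.\,B$ and $\star$ occurs in $A$. Row concatenation $\rho_1\odot\rho_2$ is defined only when $\rho_1=\ell_1{:}A_1;\dots;\ell_n{:}A_n;\cdot$, and then equals $\ell_1{:}A_1;\dots;\ell_n{:}A_n;\rho_2$. $\mathit{dom}(\rho)$ is the set of labels in the top-level label prefix of $\rho$. A row $\rho$ ends with $\star$ if $\rho=\rho'\odot\star$ for some $\rho'$. Type equivalence $\equiv$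 is the least equivalence relation that is a congruence for $\to$, $\forall X{:}K.\,-$, $[-]$, $\langle-\rangle$ and $\ell{:}-;-$, and contains $\ell{:}A;\ell'{:}B;\rho \equiv \ell'{:}B;\ell{:}A;\rho$ whenever $\ell\neq\ell'$. Consistency $\simeq$ is defined inductively: $A\simeq A$; $\star\simeq A$; $A\simeq\star$; $A_1\to A_2\simeq B_1\to B_2$ if $A_1\simeq B_1$ and $A_2\simeq B_2$; $\forall X{:}K.A\simeq\forall X{:}K.B$ if $A\simeq B$; $\forall X{:}K.A\simeq B$ if $\mathbf{QPoly}(B)$, $X\notin\mathit{ftv}(B)$ and $A\simeq B$; $A\simeq\forall X{:}K.B$ if $\mathbf{QPoly}(A)$, $X\notin\mathit{ftv}(A)$ and $A\simeq B$; $[\rho_1]\simeq[\rho_2]$ and $\langle\rho_1\rangle\simeq\langle\rho_2\rangle$ if $\rho_1\simeq\rho_2$; $\ell{:}A;\rho_1\simeq B$ if $B\triangleright_\ell B',\rho_2$, $A\simeq B'$ and $\rho_1\simeq\rho_2$; $A\simeq \ell{:}B;\rho_2$ if $A\triangleright_\ell A',\rho_1$, $A'\simeq B$ and $\rho_1\simeq\rho_2$. The relation $\sim$ is defined inductively by the same rules as $\simeq$ for reflexivity, $\star$ on either side, $\to$, $\forall$ (all three $\forall$ rules, with $\sim$ in place of $\simeq$), records and variants, together with: $\ell{:}A;\rho_1\sim\ell{:}B;\rho_2$ if $A\sim B$ and $\rho_1\sim\rho_2$; $\ell{:}A;\rho_1\sim\rho_2$ if $\ell\notin\mathit{dom}(\rho_2)$,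 $\rho_2$ ends with $\star$ and $\rho_1\sim\rho_2$; $\rho_1\sim\ell{:}B;\rho_2$ if $\ell\notin\mathit{dom}(\rho_1)$, $\rho_1$ ends with $\star$ and $\rho_1\sim\rho_2$. *)

(* Types/rows of the gradual row-polymorphic calculus,
   with bound type variables X represented by de Bruijn indices, so that
   types are identified up to renaming of bound variables by construction. *)
From Stdlib Require Import List Arith.

Inductive kind : Type := KT | KR.

Definition label := nat.

Inductive ty : Type :=
  | TVar  : nat -> ty
  | TName : nat -> ty
  | TDyn  : ty
  | TBase : nat -> ty
  | TArr  : ty -> ty -> ty
  | TAll  : kind -> ty -> ty
  | TRec  : ty -> ty
  | TVnt  : ty -> ty
  | TNil  : ty
  | TCons : label -> ty -> ty -> ty.

Fixpoint lift (c : nat) (A : ty) : ty :=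
  match A with
  | TVar n => if Nat.leb c n then TVar (S n) else TVar n
  | TName a => TName a
  | TDyn => TDyn
  | TBase i => TBase i
  | TArr A1 A2 => TArr (lift c A1) (lift c A2)
  | TAll K A1 => TAll K (lift (S c) A1)
  | TRec r => TRec (lift c r)
  | TVnt r => TVnt (lift c r)
  | TNil => TNil
  | TCons l A1 r => TCons l (lift c A1) (lift c r)
  end.

Fixpoint dyn_occurs (A : ty) : Prop :=
  match A with
  | TDyn => True
  | TArr A1 A2 => dyn_occurs A1 \/ dyn_occurs A2
  | TAll _ A1 => dyn_occurs A1
  | TRec r | TVnt r => dyn_occurs r
  | TCons _ A1 r => dyn_occurs A1 \/ dyn_occurs r
  | _ => False
  end.

Definition QPoly (A : ty) : Prop :=
  (forall K B, A <> TAll K B) /\ dyn_occurs A.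

Inductive rmatch : ty -> label -> ty -> ty -> Prop :=
  | rm_head : forall l A r, rmatch (TCons l A r) l A r
  | rm_skip : forall l l' A B r r', l' <> l -> rmatch r l A r' ->
      rmatch (TCons l' B r) l A (TCons l' B r')
  | rm_dyn : forall l, rmatch TDyn l TDyn TDyn.

Fixpoint rdom (r : ty) : list label :=
  match r with
  | TCons l _ r' => l :: rdom r'
  | _ => nil
  end.

Fixpoint ends_dyn (r : ty) : Prop :=
  match r with
  | TDyn => True
  | TCons _ _ r' => ends_dyn r'
  | _ => False
  end.

Inductive tequiv : ty -> ty -> Prop :=
  | eq_refl_ : forall A, tequiv A A
  | eq_sym_ : forall A B, tequiv A B -> tequiv B A
  | eq_trans_ : forall A B C, tequiv A B -> tequiv B C -> tequiv A C
  | eq_arr : forall A1 A2 B1 B2, tequiv A1 B1 -> tequiv A2 B2 ->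
      tequiv (TArr A1 A2) (TArr B1 B2)
  | eq_all : forall K A B, tequiv A B -> tequiv (TAll K A) (TAll K B)
  | eq_rec : forall r1 r2, tequiv r1 r2 -> tequiv (TRec r1) (TRec r2)
  | eq_vnt : forall r1 r2, tequiv r1 r2 -> tequiv (TVnt r1) (TVnt r2)
  | eq_cons : forall l A B r1 r2, tequiv A B -> tequiv r1 r2 ->
      tequiv (TCons l A r1) (TCons l B r2)
  | eq_swap : forall l l' A B r, l <> l' ->
      tequiv (TCons l A (TCons l' B r)) (TCons l' B (TCons l A r)).

Inductive consistent : ty -> ty -> Prop :=
  | c_refl : forall A, consistent A A
  | c_dynL : forall A, consistent TDyn A
  | c_dynR : forall A, consistent A TDyn
  | c_arr : forall A1 A2 B1 B2, consistent A1 B1 -> consistent A2 B2 ->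
      consistent (TArr A1 A2) (TArr B1 B2)
  | c_all : forall K A B, consistent A B -> consistent (TAll K A) (TAll K B)
  | c_allL : forall K A B, QPoly B -> consistent A (lift 0 B) ->
      consistent (TAll K A) B
  | c_allR : forall K A B, QPoly A -> consistent (lift 0 A) B ->
      consistent A (TAll K B)
  | c_rec : forall r1 r2, consistent r1 r2 -> consistent (TRec r1) (TRec r2)
  | c_vnt : forall r1 r2, consistent r1 r2 -> consistent (TVnt r1) (TVnt r2)
  | c_consL : forall l A r1 B B' r2, rmatch B l B' r2 ->
      consistent A B' -> consistent r1 r2 -> consistent (TCons l A r1) B
  | c_consR : forall l A A' r1 B r2, rmatch A l A' r1 ->
      consistent A' B -> consistent r1 r2 -> consistent A (TCons l B r2).

Inductive sim : ty -> ty -> Prop :=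
  | s_refl : forall A, sim A A
  | s_dynL : forall A, sim TDyn A
  | s_dynR : forall A, sim A TDyn
  | s_arr : forall A1 A2 B1 B2, sim A1 B1 -> sim A2 B2 ->
      sim (TArr A1 A2) (TArr B1 B2)
  | s_all : forall K A B, sim A B -> sim (TAll K A) (TAll K B)
  | s_allL : forall K A B, QPoly B -> sim A (lift 0 B) -> sim (TAll K A) B
  | s_allR : forall K A B, QPoly A -> sim (lift 0 A) B -> sim A (TAll K B)
  | s_rec : forall r1 r2, sim r1 r2 -> sim (TRec r1) (TRec r2)
  | s_vnt : forall r1 r2, sim r1 r2 -> sim (TVnt r1) (TVnt r2)
  | s_cons : forall l A B r1 r2, sim A B -> sim r1 r2 ->
      sim (TCons l A r1) (TCons l B r2)
  | s_consL : forall l A r1 r2, ~ In l (rdom r2) -> ends_dyn r2 ->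
      sim r1 r2 -> sim (TCons l A r1) r2
  | s_consR : forall l B r1 r2, ~ In l (rdom r1) -> ends_dyn r1 ->
      sim r1 r2 -> sim r1 (TCons l B r2).

From Stdlib Require Import List Arith Lia Relations.

(* Consistency finds a label anywhere in the other row, whereas [sim] compares
   rows field by field in order; reordering with equivalence bridges the gap.
   Forward, by induction on consistency: a row match [rho |>_l A, rho'] either
   witnesses [rho == l:A; rho'], so the field can be moved to the front, or
   extracts [star] from a row ending in [star] that lacks [l], which is exactly
   the side condition of the [sim] rules for absent labels.  For the
   quasi-polymorphic rules, a type equivalent to a shifted type is itself
   shifted, because equivalence preserves the absence of index 0.
   Backward: [sim] is included in consistency, which is invariant under
   equivalence.  Equivalence is generated by single swaps in context and
   consistency is symmetric, so one swap on the left suffices.  The real case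
   is a swap meeting a row match; it is settled by the fact that two rows
   matching the same label with consistent fields and consistent remainders
   are consistent, proved by commuting matches at distinct labels. *)

Lemma consistent_sym A B : consistent A B -> consistent B A.
Proof. induction 1; eauto using consistent. Qed.

Lemma sim_sym A B : sim A B -> sim B A.
Proof. induction 1; eauto using sim. Qed.

Lemma rmatch_dyn r l : ~ In l (rdom r) -> ends_dyn r -> rmatch r l TDyn r.
Proof.
  induction r; simpl; intros Hl Hend; try contradiction.
  - constructor.
  - constructor; auto.
Qed.

Lemma sim_consistent A B : sim A B -> consistent A B.
Proof.
  induction 1; eauto using consistent, rmatch, rmatch_dyn.
Qed.

Fixpoint ty_size (A : ty) : nat :=
  match A with
  | TArr A1 A2 | TCons _ A1 A2 => S (ty_size A1 + ty_size A2)
  | TAll _ A1 | TRec A1 | TVnt A1 => S (ty_size A1)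
  | _ => 1
  end.

Lemma rmatch_size X l A r : rmatch X l A r -> ty_size r <= ty_size X.
Proof. induction 1; simpl; lia. Qed.

Lemma rmatch_comm X l A r l' A' r' :
  l <> l' -> rmatch X l A r -> rmatch r l' A' r' ->
  exists r'', rmatch X l' A' r'' /\ rmatch r'' l A r'.
Proof.
  intros Hll' HX; revert r' Hll'.
  induction HX as [l A r | l l1 A B r r1 Hl1 HX IH | l]; intros r' Hll' Hr.
  - exists (TCons l A r'); split; constructor; auto.
  - inversion Hr; subst.
    + exists r; split; [constructor | auto].
    + destruct (IH _ Hll' ltac:(eassumption)) as (r'' & H1 & H2).
      exists (TCons l1 B r''); split; constructor; auto.
  - inversion Hr; subst; exists TDyn; split; constructor.
Qed.

Lemma tequiv_dyn_occurs A B : tequiv A B -> dyn_occurs A <-> dyn_occurs B.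
Proof. induction 1; simpl; tauto. Qed.

Lemma tequiv_is_TAll A B :
  tequiv A B -> (exists K C, A = TAll K C) <-> (exists K C, B = TAll K C).
Proof.
  induction 1; try tauto; split; intros (? & ? & E); try discriminate E; eauto.
Qed.

Lemma tequiv_QPoly A B : tequiv A B -> QPoly A -> QPoly B.
Proof.
  intros HAB [HA Hdyn]; split.
  - intros K C ->.
    destruct (proj2 (tequiv_is_TAll _ _ HAB)) as (K' & C' & ->);
      [now exists K, C | now apply (HA K' C')].
  - now apply (tequiv_dyn_occurs _ _ HAB).
Qed.

Lemma tequiv_ends_dyn A B : tequiv A B -> ends_dyn A <-> ends_dyn B.
Proof. induction 1; simpl; tauto. Qed.

Lemma tequiv_rdom A B l : tequiv A B -> In l (rdom A) <-> In l (rdom B).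
Proof. induction 1; simpl; tauto. Qed.

Lemma consistent_rmatch X Y l X' Y' r s :
  rmatch X l X' r -> rmatch Y l Y' s -> consistent X' Y' -> consistent r s ->
  consistent X Y.
Proof.
  (* The recursion goes to a tail on one side and to a commuted remainder on
     the other, so only the combined size decreases. *)
  remember (ty_size X + ty_size Y) as n eqn:Hn.
  revert X Y X' Y' r s Hn.
  induction n as [n IH] using lt_wf_ind.
  intros X Y X' Y' r s -> HX HY HXY Hrs.
  inversion HX as [| l1 ? ? B X1 r1 Hl1 HX1 | ]; subst;
    [eauto using consistent | | apply c_dynL].
  inversion HY as [| l2 ? ? C Y1 s1 Hl2 HY1 | ]; subst;
    [eauto using consistent | | apply c_dynR].
  inversion Hrs as [ | | | | | | | | | ? ? ? ? P u Hu HBP Hr1u | ? ? Q v ? ? Hv HQC Hvs1];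
    subst.
  - eapply c_consL; [constructor | apply c_refl |].
    eapply IH; [| reflexivity | exact HX1 | exact HY1 | exact HXY | apply c_refl].
    simpl; lia.
  - destruct (rmatch_comm _ _ _ _ _ _ _ (not_eq_sym Hl1) HY Hu) as (u' & HYu' & Hu').
    eapply c_consL; [exact HYu' | exact HBP |].
    pose proof (rmatch_size _ _ _ _ HYu').
    eapply IH; [| reflexivity | exact HX1 | exact Hu' | exact HXY | exact Hr1u].
    simpl in *; lia.
  - destruct (rmatch_comm _ _ _ _ _ _ _ (not_eq_sym Hl2) HX Hv) as (v' & HXv' & Hv').
    eapply c_consR; [exact HXv' | exact HQC |].
    pose proof (rmatch_size _ _ _ _ HXv').
    eapply IH; [| reflexivity | exact Hv' | exact HY1 | exact HXY | exact Hvs1].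
    simpl in *; lia.
Qed.

Inductive tstep : ty -> ty -> Prop :=
  | tstep_arrL A A' B : tstep A A' -> tstep (TArr A B) (TArr A' B)
  | tstep_arrR A B B' : tstep B B' -> tstep (TArr A B) (TArr A B')
  | tstep_all K A A' : tstep A A' -> tstep (TAll K A) (TAll K A')
  | tstep_rec r r' : tstep r r' -> tstep (TRec r) (TRec r')
  | tstep_vnt r r' : tstep r r' -> tstep (TVnt r) (TVnt r')
  | tstep_consL l A A' r : tstep A A' -> tstep (TCons l A r) (TCons l A' r)
  | tstep_consR l A r r' : tstep r r' -> tstep (TCons l A r) (TCons l A r')
  | tstep_swap l l' A B r : l <> l' ->
      tstep (TCons l A (TCons l' B r)) (TCons l' B (TCons l A r)).

Lemma tstep_sym A B : tstep A B -> tstep B A.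
Proof. induction 1; constructor; auto. Qed.

Lemma tstep_tequiv A B : tstep A B -> tequiv A B.
Proof. induction 1; eauto using tequiv. Qed.

Lemma tstep_lift c A B : tstep A B -> tstep (lift c A) (lift c B).
Proof. intros H; revert c; induction H; intros; simpl; constructor; auto. Qed.

Lemma tstep_consistent A B : tstep A B -> consistent A B.
Proof. induction 1; eauto 6 using consistent, rmatch. Qed.

Lemma rmatch_tstep X l A r X' :
  rmatch X l A r -> tstep X X' ->
  exists A' r', rmatch X' l A' r' /\
    clos_refl ty tstep A A' /\ clos_refl ty tstep r r'.
Proof.
  intros HX; revert X'.
  induction HX as [l A r | l l1 A B r r1 Hl1 HX IH | l]; intros X' Hst;
    inversion Hst; subst.
  - exists A', r; eauto using rmatch, clos_refl.
  - exists A, r'; eauto using rmatch, clos_refl.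
  - exists A, (TCons l' B r0).
    split; [constructor; [congruence | constructor] | split; apply r_refl].
  - exists A, (TCons l1 A' r1).
    split; [constructor; auto | split; [apply r_refl | do 2 constructor; auto]].
  - destruct (IH _ ltac:(eassumption)) as (A' & r1' & HX' & HA & Hr).
    exists A', (TCons l1 B r1'); split; [constructor; auto | split; auto].
    destruct Hr; eauto using clos_refl, tstep.
  - inversion HX as [| ? ? ? ? ? r2 Hl2 Hr2 |]; subst.
    + exists A, (TCons l1 B r1).
      split; [constructor | split; apply r_refl].
    + exists A, (TCons l' B0 (TCons l1 B r2)).
      split; [do 2 (constructor; auto) | split; [apply r_refl | apply r_step, tstep_swap; auto]].
Qed.

Lemma consistent_tstep_l A A' B : tstep A A' -> consistent A B -> consistent A' B.
Proof.
  intros Hst HAB; revert A' Hst.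
  induction HAB as [A | A | A | A1 A2 B1 B2 H1 IH1 H2 IH2 | K A B H IH
    | K A B HQ H IH | K A B HQ H IH | r1 r2 H IH | r1 r2 H IH
    | l A r1 B B' r2 HB H1 IH1 H2 IH2 | l A A0 r1 B r2 HA H1 IH1 H2 IH2];
    intros A' Hst.
  - apply consistent_sym, tstep_consistent, Hst.
  - inversion Hst.
  - apply c_dynR.
  - inversion Hst; subst; apply c_arr; auto.
  - inversion Hst; subst; apply c_all; auto.
  - inversion Hst; subst; apply c_allL; auto.
  - apply c_allR; [eauto using tequiv_QPoly, tstep_tequiv | auto using tstep_lift].
  - inversion Hst; subst; apply c_rec; auto.
  - inversion Hst; subst; apply c_vnt; auto.
  - inversion Hst; subst; [eapply c_consL; eauto .. |].
    eapply consistent_rmatch; [| exact HB | exact H1 | exact H2].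
    constructor; [auto | constructor].
  - destruct (rmatch_tstep _ _ _ _ _ HA Hst) as (A1 & r1' & HA' & HA1 & Hr1).
    eapply c_consR; [exact HA' | destruct HA1 | destruct Hr1]; auto.
Qed.

Notation tsteps := (clos_refl_sym_trans ty tstep).

Lemma tsteps_congr (f : ty -> ty) :
  (forall A B, tstep A B -> tstep (f A) (f B)) ->
  forall A B, tsteps A B -> tsteps (f A) (f B).
Proof. intros Hf; induction 1; eauto using clos_refl_sym_trans. Qed.

Lemma tequiv_tsteps A B : tequiv A B -> tsteps A B.
Proof.
  induction 1.
  - apply rst_refl.
  - now apply rst_sym.
  - eapply rst_trans; eassumption.
  - apply rst_trans with (TArr B1 A2).
    + apply (tsteps_congr (fun X => TArr X A2)); auto using tstep.
    + apply (tsteps_congr (TArr B1)); auto using tstep.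
  - apply (tsteps_congr (TAll K)); auto using tstep.
  - apply (tsteps_congr TRec); auto using tstep.
  - apply (tsteps_congr TVnt); auto using tstep.
  - apply rst_trans with (TCons l B r1).
    + apply (tsteps_congr (fun X => TCons l X r1)); auto using tstep.
    + apply (tsteps_congr (TCons l B)); auto using tstep.
  - now apply rst_step, tstep_swap.
Qed.

Lemma consistent_tsteps_l A A' B : tsteps A A' -> consistent A B <-> consistent A' B.
Proof.
  induction 1; try tauto.
  split; eauto using consistent_tstep_l, tstep_sym.
Qed.

Lemma consistent_tequiv A A' B B' :
  tequiv A A' -> tequiv B B' -> consistent A B -> consistent A' B'.
Proof.
  intros HA HB HAB.
  apply (consistent_tsteps_l _ _ _ (tequiv_tsteps _ _ HA)) in HAB.
  apply consistent_sym, (consistent_tsteps_l _ _ _ (tequiv_tsteps _ _ HB)).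
  now apply consistent_sym.
Qed.

Fixpoint lower (c : nat) (A : ty) : ty :=
  match A with
  | TVar n => if Nat.ltb c n then TVar (pred n) else TVar n
  | TArr A1 A2 => TArr (lower c A1) (lower c A2)
  | TAll K A1 => TAll K (lower (S c) A1)
  | TRec r => TRec (lower c r)
  | TVnt r => TVnt (lower c r)
  | TCons l A1 r => TCons l (lower c A1) (lower c r)
  | _ => A
  end.

Fixpoint not_free (c : nat) (A : ty) : Prop :=
  match A with
  | TVar n => n <> c
  | TArr A1 A2 | TCons _ A1 A2 => not_free c A1 /\ not_free c A2
  | TAll _ A1 => not_free (S c) A1
  | TRec r | TVnt r => not_free c r
  | _ => True
  end.

Lemma lower_lift c A : lower c (lift c A) = A.
Proof.
  revert c; induction A; intros c; simpl; f_equal; auto.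
  destruct (Nat.leb_spec c n); simpl.
  - destruct (Nat.ltb_spec c (S n)); [reflexivity | lia].
  - destruct (Nat.ltb_spec c n); [lia | reflexivity].
Qed.

Lemma not_free_lift c A : not_free c (lift c A).
Proof.
  revert c; induction A; intros c; simpl; auto.
  destruct (Nat.leb_spec c n); simpl; lia.
Qed.

Lemma lift_lower c A : not_free c A -> lift c (lower c A) = A.
Proof.
  revert c; induction A; intros c H; simpl in *; f_equal; intuition.
  destruct (Nat.ltb_spec c n); simpl.
  - destruct (Nat.leb_spec c (pred n)); [f_equal; lia | lia].
  - destruct (Nat.leb_spec c n); [lia | reflexivity].
Qed.

Lemma tequiv_not_free c A B : tequiv A B -> not_free c A <-> not_free c B.
Proof. intros H; revert c; induction H; intros; simpl; firstorder. Qed.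

Lemma tequiv_lower c A B : tequiv A B -> tequiv (lower c A) (lower c B).
Proof. intros H; revert c; induction H; intros; simpl; eauto using tequiv. Qed.

Lemma tequiv_lift_inv c A B :
  tequiv (lift c A) B -> exists B0, B = lift c B0 /\ tequiv A B0.
Proof.
  intros H; exists (lower c B); split.
  - symmetry; apply lift_lower, (tequiv_not_free _ _ _ H), not_free_lift.
  - rewrite <- (lower_lift c A); now apply tequiv_lower.
Qed.

Lemma rmatch_tequiv_or_dyn X l A r :
  rmatch X l A r ->
  tequiv X (TCons l A r) \/
  (A = TDyn /\ r = X /\ ~ In l (rdom X) /\ ends_dyn X).
Proof.
  induction 1 as [l A r | l l' A B r r' Hl' _ [IH | (-> & -> & Hl & Hend)] | l].
  - left; apply eq_refl_.
  - left; eapply eq_trans_; [apply eq_cons; [apply eq_refl_ | exact IH] |].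
    now apply eq_swap.
  - right; simpl; intuition.
  - right; simpl; intuition.
Qed.

Definition sim_tequiv (A B : ty) : Prop :=
  exists A' B', tequiv A A' /\ sim A' B' /\ tequiv B' B.

Lemma sim_sim_tequiv A B : sim A B -> sim_tequiv A B.
Proof. exists A, B; auto using eq_refl_. Qed.

Lemma sim_tequiv_sym A B : sim_tequiv A B -> sim_tequiv B A.
Proof. intros (A' & B' & HA & HAB & HB); exists B', A'; auto using eq_sym_, sim_sym. Qed.

Lemma sim_tequiv_tequiv_r A B C : sim_tequiv A B -> tequiv B C -> sim_tequiv A C.
Proof. intros (A' & B' & HA & HAB & HB) HC; exists A', B'; eauto using eq_trans_. Qed.

Lemma sim_tequiv_arr A1 A2 B1 B2 :
  sim_tequiv A1 B1 -> sim_tequiv A2 B2 -> sim_tequiv (TArr A1 A2) (TArr B1 B2).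
Proof.
  intros (A1' & B1' & ? & ? & ?) (A2' & B2' & ? & ? & ?).
  exists (TArr A1' A2'), (TArr B1' B2'); auto using eq_arr, s_arr.
Qed.

Lemma sim_tequiv_all K A B : sim_tequiv A B -> sim_tequiv (TAll K A) (TAll K B).
Proof.
  intros (A' & B' & ? & ? & ?); exists (TAll K A'), (TAll K B'); auto using eq_all, s_all.
Qed.

Lemma sim_tequiv_rec r1 r2 : sim_tequiv r1 r2 -> sim_tequiv (TRec r1) (TRec r2).
Proof.
  intros (r1' & r2' & ? & ? & ?); exists (TRec r1'), (TRec r2'); auto using eq_rec, s_rec.
Qed.

Lemma sim_tequiv_vnt r1 r2 : sim_tequiv r1 r2 -> sim_tequiv (TVnt r1) (TVnt r2).
Proof.
  intros (r1' & r2' & ? & ? & ?); exists (TVnt r1'), (TVnt r2'); auto using eq_vnt, s_vnt.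
Qed.

Lemma sim_tequiv_cons l A B r1 r2 :
  sim_tequiv A B -> sim_tequiv r1 r2 -> sim_tequiv (TCons l A r1) (TCons l B r2).
Proof.
  intros (A' & B' & ? & ? & ?) (r1' & r2' & ? & ? & ?).
  exists (TCons l A' r1'), (TCons l B' r2'); auto using eq_cons, s_cons.
Qed.

Lemma sim_tequiv_allL K A B :
  QPoly B -> sim_tequiv A (lift 0 B) -> sim_tequiv (TAll K A) B.
Proof.
  intros HQ (A' & B' & HA & HAB & HB).
  destruct (tequiv_lift_inv 0 B B' (eq_sym_ _ _ HB)) as (B0 & -> & HB0).
  exists (TAll K A'), B0; split; [|split].
  - now apply eq_all.
  - apply s_allL; [eapply tequiv_QPoly |]; eassumption.
  - now apply eq_sym_.
Qed.

Lemma sim_tequiv_consL l A r1 B B' r2 :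
  rmatch B l B' r2 -> sim_tequiv A B' -> sim_tequiv r1 r2 ->
  sim_tequiv (TCons l A r1) B.
Proof.
  intros HB HAB' Hr.
  destruct (rmatch_tequiv_or_dyn _ _ _ _ HB) as [HBeq | (-> & -> & Hl & Hend)].
  - eapply sim_tequiv_tequiv_r; [apply sim_tequiv_cons; eassumption |].
    now apply eq_sym_.
  - destruct Hr as (r1' & B1 & Hr1 & Hsim & HB1).
    exists (TCons l A r1'), B1; split; [|split]; auto.
    + apply eq_cons; [apply eq_refl_ | exact Hr1].
    + apply s_consL; [rewrite (tequiv_rdom _ _ _ HB1) | apply (tequiv_ends_dyn _ _ HB1) |];
        assumption.
Qed.

Lemma consistent_sim_tequiv A B : consistent A B -> sim_tequiv A B.
Proof.
  induction 1; eauto using sim_sim_tequiv, sim, sim_tequiv_arr, sim_tequiv_all,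
    sim_tequiv_rec, sim_tequiv_vnt, sim_tequiv_allL, sim_tequiv_consL.
  - apply sim_tequiv_sym, sim_tequiv_allL; auto using sim_tequiv_sym.
  - apply sim_tequiv_sym; eapply sim_tequiv_consL; eauto using sim_tequiv_sym.
Qed.

Theorem mainTheorem1 : forall A B : ty,
  consistent A B <->
  exists A' B' : ty, tequiv A A' /\ sim A' B' /\ tequiv B' B.
Proof.
  intros A B; split.
  - apply consistent_sim_tequiv.
  - intros (A' & B' & HA & HAB & HB).
    eapply consistent_tequiv; [apply eq_sym_, HA | exact HB |].
    now apply sim_consistent.
Qed.
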